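(* Let $A$ be a unital associative (not necessarily commutative) $\mathbb{K}$-algebra and let $\bullet^\ell$ be the left-shift shuffle product on $T(A)$. Then: (1) for every $n\in\mathbb{N}$ and $X\in T(A)$, $X\bullet^\ell 1_A^{\otimes n}=1_A^{\otimes n}\otimes X=1_A^{\otimes n}\bullet^\ell X$; (2) $\bullet^\ell$ is associative with unit $1_{\mathbb{K}}$, and it is commutative if and only if $A$ is commutative.
   Context: $\mathbb{K}$ is a field of characteristic $0$, $A$ has product $[a;b]$ and unit $1_A$. $T(A)=\bigoplus_{n\ge0}A^{\otimes n}$ with $A^{\otimes0}=\mathbb{K}1_{\mathbb{K}}$ ($1_{\mathbb{K}}$ the empty word); $a\otimes1_{\mathbb{K}}$ is identified with $a$, and $1_A^{\otimes n}$ is the word of $n$ copies of $1_A$ ($1_A^{\otimes 0}=1_{\mathbb{K}}$). The left-shift shuffle $\bullet^\ell$ is the bilinear product on $T(A)$ with $k1_{\mathbb{K}}\bullet^\ell U=kU=U\bullet^\ell k1_{\mathbb{K}}$ ($k\in\mathbb{K}$) and, for $a,b\in A$, $U,V\in T(A)$, $(a\otimes U)\bullet^\ell(b\otimes V)=a\otimes\bigl(U\bullet^\ell(b\otimes V)\bigr)+b\otimes\bigl((a\otimes U)\bullet^\ell V\bigr)-[a;b]\otimes1_A\otimes(U\bullet^\ell V)$. *)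

(* T(A) is modelled as the quotient of the free K-module on
   words over A (monalg: {malg K[seq A]}) by the multilinearity relations. *)
From HB Require Import structures.
From mathcomp Require Import all_boot all_algebra.
From mathcomp Require Import finmap.
From mathcomp.multinomials Require Import monalg.
Set Implicit Arguments. Unset Strict Implicit. Unset Printing Implicit Defensive.
Import GRing.Theory.
Local Open Scope ring_scope.

Section TensorAlgebra.
Variables (K : fieldType) (A : algType K).

Definition TF := {malg K[seq A]}.

(* the basis element a_1 (x) ... (x) a_n ; word [::] is 1_K *)
Definition word (w : seq A) : TF := << w >>.

Definition lift (f : seq A -> TF) (X : TF) : TF :=
  \sum_(w <- msupp X) X@_w *: f w.

Definition pre (a : A) (X : TF) : TF := lift (fun w => word (a :: w)) X.

Definition tcat (u : seq A) (X : TF) : TF := lift (fun w => word (u ++ w)) X.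

Fixpoint shw (u : seq A) : seq A -> TF :=
  match u with
  | [::] => fun v => word v
  | a :: u' =>
      fix shv (v : seq A) : TF :=
        match v with
        | [::] => word (a :: u')
        | b :: v' => pre a (shw u' (b :: v')) + pre b (shv v')
                     - pre (a * b) (pre 1 (shw u' v'))
        end
  end.

Definition shl (X Y : TF) : TF := lift (fun u => lift (fun v => shw u v) Y) X.

Definition ones (n : nat) : seq A := nseq n 1.

Inductive mlrel : TF -> Prop :=
| mlr_add (u v : seq A) (a b : A) :
    mlrel (word (u ++ (a + b) :: v) - word (u ++ a :: v) - word (u ++ b :: v))
| mlr_scale (u v : seq A) (k : K) (a : A) :
    mlrel (word (u ++ (k *: a) :: v) - k *: word (u ++ a :: v))
| mlr0 : mlrel 0
| mlrD (X Y : TF) : mlrel X -> mlrel Y -> mlrel (X + Y)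
| mlrZ (k : K) (X : TF) : mlrel X -> mlrel (k *: X).

Definition teq (X Y : TF) : Prop := mlrel (X - Y).

End TensorAlgebra.

From Pilot Require Import Defs.
From mathcomp Require Import all_boot all_algebra.
From mathcomp Require Import finmap.
From mathcomp.multinomials Require Import monalg.
From mathcomp Require Import zify.
Set Implicit Arguments. Unset Strict Implicit. Unset Printing Implicit Defensive.
Import GRing.Theory.
Local Open Scope fset_scope.
Local Open Scope ring_scope.

(* All identities hold already in the free module TF, before dividing out the
   multilinearity relations.  Associativity: expanding (u • v) • w and
   u • (v • w) once by the defining recursion yields the same seven terms, up to
   shorter instances of associativity, given that
   (1_A ⊗ M) • N = 1_A ⊗ (M • N) = M • (1_A ⊗ N); the latter holds because the
   two 1_A-terms of the recursion cancel, and iterating it gives part (1).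
   Commutativity: the recursion is symmetric when A is commutative; conversely
   a • b - b • a = (ba - ab) ⊗ 1_A, and the multiplication map
   a_1 ⊗ ... ⊗ a_n ↦ a_1 ... a_n, which kills the multilinearity relations,
   sends it to ba - ab. *)

Lemma morphB_of_morphD (U W : zmodType) (f : U -> W) :
  {morph f : x y / x + y} -> {morph f : x y / x - y}.
Proof. by move=> fD x y; apply/eqP; rewrite eq_sym subr_eq -fD subrK. Qed.

Section ShuffleRecursion.
Variables (R : ringType) (V : zmodType) (e : V) (pre : R -> V -> V) (mul : V -> V -> V).
Hypotheses (preD : forall a, {morph pre a : X Y / X + Y})
  (mulDl : forall Z, {morph mul^~ Z : X Y / X + Y})
  (mulDr : forall X, {morph mul X : Y Z / Y + Z})
  (mul_pre : forall a c M N, mul (pre a M) (pre c N) =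
     pre a (mul M (pre c N)) + pre c (mul (pre a M) N) - pre (a * c) (pre 1 (mul M N)))
  (mul_pre1l : forall M N, mul (pre 1 M) N = pre 1 (mul M N))
  (mul_pre1r : forall M N, mul M (pre 1 N) = pre 1 (mul M N))
  (mul1l : left_id e mul) (mul1r : right_id e mul).

Fixpoint prew (w : seq R) : V := if w is a :: w' then pre a (prew w') else e.

Let preB a := morphB_of_morphD (preD a).
Let mulBl Z := morphB_of_morphD (mulDl Z).
Let mulBr X := morphB_of_morphD (mulDr X).

Lemma mul_pre3l a b c P Q S :
  mul (mul (pre a P) (pre b Q)) (pre c S) =
    pre a (mul (mul P (pre b Q)) (pre c S)) + pre b (mul (mul (pre a P) Q) (pre c S))
  + pre c (mul (mul (pre a P) (pre b Q)) S)
  - pre (a * c) (pre 1 (mul (mul P (pre b Q)) S))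
  - pre (b * c) (pre 1 (mul (mul (pre a P) Q) S))
  - pre (a * b) (pre 1 (mul (mul P Q) (pre c S)))
  + pre (a * b * c) (pre 1 (pre 1 (mul (mul P Q) S))).
Proof.
rewrite (mul_pre a b) !mulBl !mulDl (mul_pre a c) (mul_pre b c) (mul_pre (a * b) c).
by rewrite !preB !preD !mul_pre1l !opprD !opprK !addrA (ACl (1*4*2*5*8*3*6*7*9)).
Qed.

Lemma mul_pre3r a b c P Q S :
  mul (pre a P) (mul (pre b Q) (pre c S)) =
    pre a (mul P (mul (pre b Q) (pre c S))) + pre b (mul (pre a P) (mul Q (pre c S)))
  + pre c (mul (pre a P) (mul (pre b Q) S))
  - pre (a * c) (pre 1 (mul P (mul (pre b Q) S)))
  - pre (b * c) (pre 1 (mul (pre a P) (mul Q S)))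
  - pre (a * b) (pre 1 (mul P (mul Q (pre c S))))
  + pre (a * (b * c)) (pre 1 (pre 1 (mul P (mul Q S)))).
Proof.
rewrite (mul_pre b c) !mulBr !mulDr (mul_pre a b) (mul_pre a c) (mul_pre a (b * c)).
by rewrite !preB !preD !mul_pre1r !opprD !opprK !addrA (ACl (1*4*7*2*5*6*8*3*9)).
Qed.

Lemma mul_prewA u v w :
  mul (mul (prew u) (prew v)) (prew w) = mul (prew u) (mul (prew v) (prew w)).
Proof.
have [n] := ubnP (size u + size v + size w).
elim: n u v w => // n IH [|a u] [|b v] [|c w] size_lt; rewrite /= ?mul1l ?mul1r //.
rewrite mul_pre3l mul_pre3r -mulrA -/(prew (a :: u)) -/(prew (b :: v)) -/(prew (c :: w)).
by rewrite !IH //=; move: size_lt => /=; lia.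
Qed.

End ShuffleRecursion.

Section LeftShiftShuffle.
Variables (K : fieldType) (A : algType K).
Local Notation TF := (TF A).
Local Notation lift := (@Defs.lift K A).
Local Notation word := (@word K A).
Local Notation pre := (@pre K A).
Local Notation shw := (@shw K A).
Local Notation shl := (@shl K A).
Implicit Types (X Y Z M N P Q S : TF) (f g : seq A -> TF) (L : TF -> TF)
  (a b c : A) (u v w : seq A).

Lemma liftEsupp f X (d : {fset seq A}) : msupp X `<=` d ->
  lift f X = \sum_(w <- d) X@_w *: f w.
Proof.
move=> le; rewrite /Defs.lift [LHS](big_fset_incl _ le) => //= x _ /mcoeff_outdom ->.
by rewrite scale0r.
Qed.

Lemma lift_word f w : lift f (word w) = f w.
Proof. by rewrite (liftEsupp _ msuppU_le) big_seq_fset1 mcoeffUU scale1r. Qed.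

Lemma lift_is_linear f : linear (lift f).
Proof.
move=> k X Y; set d := msupp X `|` msupp Y.
have dX : msupp X `<=` d by apply: fsubsetUl.
have dY : msupp Y `<=` d by apply: fsubsetUr.
have dZ : msupp (k *: X + Y) `<=` d.
  apply: fsubset_trans (msuppD_le _ _) _; rewrite fsubUset dY andbT.
  exact: fsubset_trans (msuppZ_le _ _) dX.
rewrite !(liftEsupp _ dX, liftEsupp _ dY, liftEsupp _ dZ) scaler_sumr -big_split.
by apply: eq_bigr => w _; rewrite mcoeffD mcoeffZ scalerDl scalerA.
Qed.

Lemma eq_lift f g X : f =1 g -> lift f X = lift g X.
Proof. by move=> e; apply: eq_bigr => w _; rewrite e. Qed.

Lemma lift_linear_in_fun k f g X :
  lift (fun w => k *: f w + g w) X = k *: lift f X + lift g X.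
Proof.
rewrite /Defs.lift scaler_sumr -big_split; apply: eq_bigr => w _.
by rewrite scalerDr !scalerA mulrC.
Qed.

Lemma lift_wordE X : lift word X = X.
Proof.
rewrite {2}(monalgE X); apply: eq_bigr => w _; apply/malgP => k.
by rewrite /Defs.word mcoeffZ !mcoeffU mulr_natr.
Qed.

Lemma linear_lift L f X : linear L -> L (lift f X) = lift (L \o f) X.
Proof.
move=> hL; have [L0 LD] := nmod_morphism_semilinear (GRing.semilinear_linear hL).
rewrite /Defs.lift (big_morph L LD L0).
by apply: eq_bigr => w _; rewrite (scalable_linear hL).
Qed.

Lemma linear_eq_words L1 L2 : linear L1 -> linear L2 ->
  (forall w, L1 (word w) = L2 (word w)) -> forall X, L1 X = L2 X.
Proof.
move=> h1 h2 e X.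
by rewrite -(lift_wordE X) !linear_lift //; apply: eq_lift => w /=.
Qed.

Lemma linear_id : linear (fun X : TF => X).
Proof. by []. Qed.

Lemma linear_comp L1 L2 : linear L1 -> linear L2 -> linear (fun X => L1 (L2 X)).
Proof. by move=> h1 h2 k X Y; rewrite h2 h1. Qed.

Lemma linear_add L1 L2 : linear L1 -> linear L2 -> linear (fun X => L1 X + L2 X).
Proof. by move=> h1 h2 k X Y; rewrite h1 h2 scalerDr addrACA. Qed.

Lemma linear_sub L1 L2 : linear L1 -> linear L2 -> linear (fun X => L1 X - L2 X).
Proof. by move=> h1 h2 k X Y; rewrite h1 h2 scalerBr opprD [LHS]addrACA. Qed.

Lemma linear_additive L : linear L -> {morph L : X Y / X + Y}.
Proof. by move=> hL; case: (GRing.semilinear_linear hL). Qed.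

Lemma pre_is_linear a : linear (pre a).
Proof. exact: lift_is_linear. Qed.

Lemma shl_is_linearl Y : linear (fun X => shl X Y).
Proof. exact: lift_is_linear. Qed.

Lemma shl_is_linearr X : linear (shl X).
Proof.
move=> k Y1 Y2; rewrite /shl -lift_linear_in_fun.
by apply: eq_lift => u; rewrite lift_is_linear.
Qed.

Lemma pre_word a w : pre a (word w) = word (a :: w).
Proof. exact: lift_word. Qed.

Lemma shl_word u v : shl (word u) (word v) = shw u v.
Proof. by rewrite /shl !lift_word. Qed.

Lemma shw_cons a u b v : shw (a :: u) (b :: v) =
  pre a (shw u (b :: v)) + pre b (shw (a :: u) v) - pre (a * b) (pre 1 (shw u v)).
Proof. by []. Qed.

Lemma shw_nilr u : shw u [::] = word u.
Proof. by case: u. Qed.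

Ltac linearity := repeat match goal with
  | |- linear (fun x => @?F x - @?G x) => apply: (linear_sub (L1 := F) (L2 := G))
  | |- linear (fun x => @?F x + @?G x) => apply: (linear_add (L1 := F) (L2 := G))
  | |- linear (fun x => pre ?a (@?F x)) => apply: (linear_comp (pre_is_linear a) (L2 := F))
  | |- linear (fun x => shl ?M (@?F x)) => apply: (linear_comp (shl_is_linearr M) (L2 := F))
  | |- linear (fun x => shl (@?F x) ?N) => apply: (linear_comp (shl_is_linearl N) (L2 := F))
  | |- linear (fun x => x) => exact: linear_id
  | |- linear (shl _) => exact: shl_is_linearr
  end.

Tactic Notation "on_words" ident(X) ident(w) :=
  move: X; apply: linear_eq_words; [linearity | linearity | move=> w /=].

Lemma shl_pre a c M N : shl (pre a M) (pre c N) =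
  pre a (shl M (pre c N)) + pre c (shl (pre a M) N) - pre (a * c) (pre 1 (shl M N)).
Proof. by on_words M u; on_words N v; rewrite !pre_word !shl_word shw_cons. Qed.

Lemma shl_pre1l M N : shl (pre 1 M) N = pre 1 (shl M N).
Proof.
on_words M u; on_words N v; rewrite pre_word !shl_word.
elim: v => [|c v IHv]; first by rewrite !shw_nilr pre_word.
by rewrite shw_cons IHv mul1r addrK.
Qed.

Lemma shl_pre1r M N : shl M (pre 1 N) = pre 1 (shl M N).
Proof.
on_words M u; on_words N v; rewrite pre_word !shl_word.
elim: u => [|a u IHu]; first by rewrite /= pre_word.
by rewrite shw_cons IHu mulr1 addrAC subrr add0r.
Qed.

Lemma shl_nill X : shl (word [::]) X = X.
Proof. by rewrite /shl lift_word lift_wordE. Qed.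

Lemma shl_nilr X : shl X (word [::]) = X.
Proof. by rewrite -[RHS]lift_wordE; apply: eq_lift => u; rewrite lift_word shw_nilr. Qed.

Lemma preD a : {morph pre a : X Y / X + Y}.
Proof. exact/linear_additive/pre_is_linear. Qed.

Lemma shlDl Z : {morph shl^~ Z : X Y / X + Y}.
Proof. exact/linear_additive/shl_is_linearl. Qed.

Lemma shlDr X : {morph shl X : Y Z / Y + Z}.
Proof. exact/linear_additive/shl_is_linearr. Qed.

Lemma prew_word w : prew (word [::]) pre w = word w.
Proof. by elim: w => //= a w ->; rewrite pre_word. Qed.

Lemma shl_assoc X Y Z : shl (shl X Y) Z = shl X (shl Y Z).
Proof.
on_words X u; on_words Y v; on_words Z w.
rewrite -(prew_word u) -(prew_word v) -(prew_word w).
exact: (mul_prewA preD shlDl shlDr shl_pre shl_pre1l shl_pre1r shl_nill shl_nilr u v w).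
Qed.

Lemma tcat_nil X : tcat [::] X = X.
Proof. exact: lift_wordE. Qed.

Lemma tcat_cons a u X : tcat (a :: u) X = pre a (tcat u X).
Proof.
rewrite /tcat (linear_lift _ _ (pre_is_linear a)).
by apply: eq_lift => w /=; rewrite pre_word.
Qed.

Lemma shl_onesr n X : shl X (word (ones A n)) = tcat (ones A n) X.
Proof.
elim: n => [|n IHn]; first by rewrite shl_nilr tcat_nil.
by rewrite -pre_word shl_pre1r IHn tcat_cons.
Qed.

Lemma shl_onesl n X : shl (word (ones A n)) X = tcat (ones A n) X.
Proof.
elim: n => [|n IHn]; first by rewrite shl_nill tcat_nil.
by rewrite -pre_word shl_pre1l IHn tcat_cons.
Qed.

Lemma shw_comm : commutative (@GRing.mul A) -> commutative shw.
Proof.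
move=> mulC u; elim: u => [|a u IHu] v; first by rewrite shw_nilr.
elim: v => [|b v IHv]; first by rewrite shw_nilr.
by rewrite !shw_cons IHu IHv [shw u v]IHu mulC [pre a _ + _]addrC.
Qed.

Lemma shl_comm : commutative (@GRing.mul A) -> commutative shl.
Proof. by move=> mulC X Y; on_words X u; on_words Y v; rewrite !shl_word shw_comm. Qed.

Definition tmul (X : TF) : A := mmap (in_alg A) (fun w => \prod_(a <- w) a) X.

Lemma tmulD : {morph tmul : X Y / X + Y}.
Proof. exact: mmapD. Qed.

Lemma tmulB : {morph tmul : X Y / X - Y}.
Proof. exact: mmapB. Qed.

Lemma tmul_word w : tmul (word w) = \prod_(a <- w) a.
Proof. by rewrite /tmul mmapU /= scale1r mul1r. Qed.

Lemma tmulZ k X : tmul (k *: X) = k *: tmul X.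
Proof.
rewrite /tmul (mmapEw (msuppZ_le k X)) mmapE scaler_sumr; apply: eq_bigr => w _.
by rewrite mcoeffZ /= -scalerA -scalerAl.
Qed.

Lemma tmul_mlrel X : mlrel X -> tmul X = 0.
Proof.
elim=> {X} [u v a b | u v k a | | X Y _ tX _ tY | k X _ tX].
- by rewrite !tmulB !tmul_word !big_cat !big_cons /= mulrDl mulrDr addrAC addrK subrr.
- by rewrite tmulB tmulZ !tmul_word !big_cat !big_cons /= -scalerAl -scalerAr subrr.
- exact: mmap0.
- by rewrite tmulD tX tY addr0.
- by rewrite tmulZ tX scaler0.
Qed.

Lemma teq_refl X : teq X X.
Proof. by rewrite /teq subrr; exact: mlr0. Qed.

Lemma teq_shl_letters a b :
  teq (shl (word [:: a]) (word [:: b])) (shl (word [:: b]) (word [:: a])) -> a * b = b * a.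
Proof.
rewrite /teq !shl_word !shw_cons !shw_nilr /= !pre_word => /tmul_mlrel.
rewrite !tmulB !tmulD !tmul_word !big_cons !big_nil !mulr1.
by rewrite (addrC (a * b)) addrK (addrC (b * a) (a * b)) addrK => /eqP; rewrite subr_eq0 => /eqP.
Qed.

End LeftShiftShuffle.

Theorem proposition4p5 (K : fieldType) (A : algType K)
    (charK0 : [pchar K] =i pred0) :
  (forall (n : nat) (X : TF A),
      teq (shl X (word (ones A n))) (tcat (ones A n) X) /\
      teq (tcat (ones A n) X) (shl (word (ones A n)) X)) /\
  (forall X Y Z : TF A, teq (shl (shl X Y) Z) (shl X (shl Y Z))) /\
  (forall X : TF A, teq (shl (word [::]) X) X /\ teq (shl X (word [::])) X) /\
  ((forall X Y : TF A, teq (shl X Y) (shl Y X)) <->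
   (forall a b : A, a * b = b * a)).
Proof.
split; first by move=> n X; rewrite shl_onesr shl_onesl; split; apply: teq_refl.
split; first by move=> X Y Z; rewrite shl_assoc; apply: teq_refl.
split; first by move=> X; rewrite shl_nill shl_nilr; split; apply: teq_refl.
split=> [teqC a b | mulC X Y]; first exact/teq_shl_letters/teqC.
by rewrite (shl_comm mulC); apply: teq_refl.
Qed.
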